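(* For every positive integer $n$ and every $k\in\{0,1,\dots,n\}$, $$\sum_{\substack{J\subseteq[n]\\ |J|=n-k}}\ \prod_{i=1}^n\,[\operatorname{st}^B_i(J)+1]_q\;=\;[2k]!!_q\cdot\operatorname{Stir}^B_q(n,k).$$
   Context: $[m]_q=1+q+\dots+q^{m-1}$ for integers $m\ge1$. The $q$-double factorial is $[m]!!_q=[m]_q[m-2]_q[m-4]_q\cdots$, the product ending at $[1]_q$ or $[2]_q$ according to the parity of $m$, with $[0]!!_q=1$; thus $[2k]!!_q=[2k]_q[2k-2]_q\cdots[2]_q$. The type $B$ $q$-Stirling numbers $\operatorname{Stir}^B_q(n,k)$ are defined by $\operatorname{Stir}^B_q(0,k)=1$ if $k=0$ and $0$ otherwise, and for $n\ge1$ by $\operatorname{Stir}^B_q(n,k)=\operatorname{Stir}^B_q(n-1,k-1)+[2k+1]_q\operatorname{Stir}^B_q(n-1,k)$ (with $\operatorname{Stir}^B_q(n-1,-1)=0$). For $J\subseteq[n]$ and $i\in[n]$, the type $B$ $J$-staircase is $\operatorname{st}^B_i(J)=2\,|\{1,\dots,i-1\}\setminus J|+[i\notin J]$, where $[P]$ is $1$ if $P$ holds and $0$ otherwise. *)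

From mathcomp Require Import all_boot all_order all_algebra.
Set Implicit Arguments. Unset Strict Implicit. Unset Printing Implicit Defensive.
Import GRing.Theory.
Local Open Scope ring_scope.

(* q is a formal indeterminate: we work in {poly int}, q = 'X. *)

Definition qint (m : nat) : {poly int} := \sum_(i < m) 'X^i.

Fixpoint qdfact (m : nat) : {poly int} :=
  match m with
  | 0 => 1
  | 1 => qint 1
  | (m'.+2) as m0 => qint m0 * qdfact m'
  end.

Fixpoint StirB (n k : nat) : {poly int} :=
  match n with
  | 0 => if k == 0%N then 1 else 0
  | n'.+1 => (match k with 0 => 0 | k'.+1 => StirB n' k' end)
             + qint (2 * k).+1 * StirB n' k
  end.

(* The set [n] = {1,...,n} is represented by 'I_n,
   the ordinal i : 'I_n standing for the integer i+1.  Then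
   {1,...,i} \ J (for the element i+1) is {j : 'I_n | j < i, j \notin J}. *)
Definition stB (n : nat) (J : {set 'I_n}) (i : 'I_n) : nat :=
  (2 * #|[set j : 'I_n | (j < i)%N & j \notin J]| + (i \notin J))%N.

(* Split J ⊆ [n+1] according to whether n+1 ∈ J. The staircase values at
   1, ..., n only see J ∩ [n], while st^B_{n+1}(J) = 2c + [n+1 ∉ J] where c is
   the number of non-elements of J in [n]. Indexing the sum by the number k of
   non-elements, adding n+1 to J contributes the factor [2k+1]_q, and leaving it
   out moves k-1 to k with the factor [2k]_q = [2k]!!_q / [2k-2]!!_q: this is the
   recurrence Stir^B_q(n+1,k) = Stir^B_q(n,k-1) + [2k+1]_q Stir^B_q(n,k). *)

From mathcomp Require Import all_boot all_order all_algebra ring zify.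
Set Implicit Arguments. Unset Strict Implicit. Unset Printing Implicit Defensive.
Import GRing.Theory.
Local Open Scope ring_scope.

Lemma lift_max_widen n (j : 'I_n) : lift ord_max j = widen_ord (leqnSn n) j.
Proof. by apply: val_inj; rewrite /= /bump leqNgt ltn_ord. Qed.

Definition restr_lift n (A : {set 'I_n.+1}) : {set 'I_n} :=
  [set j | lift ord_max j \in A].

Definition extend_set n (J : {set 'I_n}) (b : bool) : {set 'I_n.+1} :=
  [set i | if unlift ord_max i is Some j then j \in J else b].

Lemma cards_ord_recr n (A : {set 'I_n.+1}) :
  #|A| = (#|restr_lift A| + (ord_max \in A))%N.
Proof.
rewrite -!sum1_card (big_mkcond (mem A)) big_ord_recr [in RHS]big_mkcond /=.
by congr addn; apply: eq_bigr => j _; rewrite inE lift_max_widen.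
Qed.

Lemma restr_liftC n (A : {set 'I_n.+1}) : restr_lift (~: A) = ~: restr_lift A.
Proof. by apply/setP => j; rewrite !inE. Qed.

Lemma cardsC_ord_recr n (A : {set 'I_n.+1}) :
  #|~: A| = (#|~: restr_lift A| + (ord_max \notin A))%N.
Proof. by rewrite cards_ord_recr restr_liftC in_setC. Qed.

Lemma stB_lift n (A : {set 'I_n.+1}) (j : 'I_n) :
  stB A (lift ord_max j) = stB (restr_lift A) j.
Proof.
rewrite /stB cards_ord_recr [ord_max \in _]inE ltnNge -ltnS ltn_ord /= addn0 inE.
congr (2 * _ + _)%N; apply: eq_card => i.
by rewrite !inE /= /bump !(leqNgt n) !ltn_ord.
Qed.

Lemma stB_max n (A : {set 'I_n.+1}) :
  stB A ord_max = (2 * #|~: restr_lift A| + (ord_max \notin A))%N.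
Proof.
rewrite /stB cards_ord_recr [ord_max \in _]inE ltnn /= addn0.
congr (2 * _ + _)%N; apply: eq_card => i.
by rewrite !inE /= /bump (leqNgt n) !ltn_ord.
Qed.

Lemma restr_lift_extend_set n (J : {set 'I_n}) b : restr_lift (extend_set J b) = J.
Proof. by apply/setP => j; rewrite !inE liftK. Qed.

Lemma mem_max_extend_set n (J : {set 'I_n}) b : (ord_max \in extend_set J b) = b.
Proof. by rewrite inE unlift_none. Qed.

Lemma big_set_ord_recr (R : Type) (idx : R) (op : Monoid.com_law idx) n
    (F : {set 'I_n.+1} -> R) :
  \big[op/idx]_(A : {set 'I_n.+1}) F A
    = \big[op/idx]_(J : {set 'I_n}) \big[op/idx]_(b : bool) F (extend_set J b).
Proof.
rewrite (reindex (fun p : {set 'I_n} * bool => extend_set p.1 p.2)) /=.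
  by rewrite -(pair_big predT predT (fun J b => F (extend_set J b))).
exists (fun A => (restr_lift A, ord_max \in A)).
  by move=> [J b] _; rewrite restr_lift_extend_set mem_max_extend_set.
move=> A _; apply/setP => i; rewrite inE.
by case: unliftP => [j ->|->]; rewrite ?inE.
Qed.

Definition stB_weight n (J : {set 'I_n}) : {poly int} :=
  \prod_(i : 'I_n) qint (stB J i).+1.

Definition stB_gen n k : {poly int} :=
  \sum_(J : {set 'I_n} | #|~: J| == k) stB_weight J.

Lemma stB_weight_recr n (A : {set 'I_n.+1}) :
  stB_weight A = stB_weight (restr_lift A) * qint (stB A ord_max).+1.
Proof.
rewrite /stB_weight big_ord_recr; congr (_ * _).
by apply: eq_bigr => i _; rewrite -lift_max_widen stB_lift.
Qed.

Lemma sum_stB_weight_cardCS n k :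
  \sum_(J : {set 'I_n} | #|~: J|.+1 == k) stB_weight J * qint (2 * #|~: J|).+2
    = if k is k'.+1 then qint (2 * k').+2 * stB_gen n k' else 0.
Proof.
case: k => [|k]; first by rewrite big_pred0.
by rewrite mulr_sumr; apply: eq_big => [J | J /eqP[->]]; rewrite 1?mulrC.
Qed.

Lemma stB_gen_recr n k :
  stB_gen n.+1 k = qint (2 * k).+1 * stB_gen n k
    + (if k is k'.+1 then qint (2 * k').+2 * stB_gen n k' else 0).
Proof.
rewrite -sum_stB_weight_cardCS /stB_gen mulr_sumr.
rewrite [LHS]big_mkcond [X in X + _]big_mkcond [X in _ + X]big_mkcond -big_split.
rewrite big_set_ord_recr; apply: eq_bigr => J _.
rewrite big_bool !cardsC_ord_recr !stB_weight_recr !stB_max.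
rewrite !restr_lift_extend_set !mem_max_extend_set /= !addn0 !addn1.
by case: eqP => [<-|_]; rewrite // mulrC.
Qed.

Lemma stB_gen0 k : stB_gen 0 k = (k == 0%N)%:R.
Proof.
have cardC0 (J : {set 'I_0}) : #|~: J| = 0%N.
  by apply/eqP; have := max_card (~: J); rewrite card_ord leqn0.
case: k => [|k]; last by rewrite /stB_gen big_pred0 // => J; rewrite cardC0.
rewrite /stB_gen (big_pred1 set0) => [|J]; first by rewrite /stB_weight big_ord0.
by rewrite cardC0 eqxx; apply/esym/eqP/setP => -[].
Qed.

Lemma qdfact_double k : qdfact (2 * k.+1) = qint (2 * k).+2 * qdfact (2 * k).
Proof. by rewrite mulnS. Qed.

Lemma stB_gen_StirB n k : stB_gen n k = qdfact (2 * k) * StirB n k.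
Proof.
elim: n k => [|n IH] [|k]; rewrite ?stB_gen0 ?stB_gen_recr ?IH.
- by rewrite mul1r.
- by rewrite mulr0.
- by rewrite [StirB n.+1 _]/=; ring.
- by rewrite [StirB n.+1 _]/= qdfact_double; ring.
Qed.

Theorem mainTheorem1 (n k : nat) (hn : (0 < n)%N) (hk : (k <= n)%N) :
  \sum_(J : {set 'I_n} | #|J| == (n - k)%N) \prod_(i : 'I_n) qint (stB J i).+1
  = qdfact (2 * k) * StirB n k.
Proof.
rewrite -stB_gen_StirB; apply: eq_bigl => J.
have := cardsC J; rewrite card_ord => cardJ.
by apply/eqP/eqP; lia.
Qed.
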